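(* Let $\mathcal{X}\subset\mathbb{R}^N$ be convex and compact, and let $f_t,f_{t+1}:\mathbb{R}^N\to\mathbb{R}$ be differentiable convex functions such that $|f_t(\mathbf{x})-f_{t+1}(\mathbf{x})|\le\Delta$ for all $\mathbf{x}\in\mathcal{X}$, for some $\Delta<\infty$. Let $\bar{\mathbf{x}}_{t+1}\in\mathcal{X}$, and let $\mathbf{g}_t\in\mathbb{R}^N$ and $\epsilon>0$ satisfy $\|\mathbf{g}_t-\nabla f_{t+1}(\bar{\mathbf{x}}_{t+1})\|\le\epsilon$, with $\|\mathbf{g}_t\|>\epsilon$. Fix $\zeta>0$, $\beta\in(0,1)$ and $M\in\mathbb{N}$, and let $\mathbf{d}_{t+1}=\mathrm{proj}_{\mathcal{X}}(\bar{\mathbf{x}}_{t+1}-\zeta\mathbf{g}_t)-\bar{\mathbf{x}}_{t+1}$. Run the following backtracking line search: let $m$ be the smallest integer in $\{0,1,\dots,M\}$ such that $$f_t(\bar{\mathbf{x}}_{t+1}+\beta^m\mathbf{d}_{t+1})\le f_t(\bar{\mathbf{x}}_{t+1})+\beta^m\big(\mathbf{g}_t^\top\mathbf{d}_{t+1}-\epsilon\|\mathbf{d}_{t+1}\|\big)-2\Delta,$$ and return step size $\beta^m$; if no such $m$ exists, return step size $0$. If the line search terminates with a step size $\beta^m>0$, then the predictive update $\mathbf{x}_{t+1}=\bar{\mathbf{x}}_{t+1}+\beta^m\mathbf{d}_{t+1}$ satisfies the modified Armijo condition $$f_{t+1}(\bar{\mathbf{x}}_{t+1}+\beta^m\mathbf{d}_{t+1})\le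 f_{t+1}(\bar{\mathbf{x}}_{t+1})+\beta^m\nabla f_{t+1}(\bar{\mathbf{x}}_{t+1})^\top\mathbf{d}_{t+1},$$ and hence leads to a sufficient decrease in the loss function.
   Context: $\|\cdot\|$ is the Euclidean norm and $\mathrm{proj}_{\mathcal{X}}(\mathbf{x})\in\arg\min_{\mathbf{y}\in\mathcal{X}}\|\mathbf{x}-\mathbf{y}\|$. In the paper's online setting, $\bar{\mathbf{x}}_{t+1}$ is the decision computed by an online convex optimization update at round $t$ after $f_t$ is revealed, $\mathbf{g}_t$ is an estimate of the gradient of the (not yet revealed) next loss $f_{t+1}$ at $\bar{\mathbf{x}}_{t+1}$ with error at most $\epsilon$, and $\Delta$ is a time-Lipschitz constant of the loss sequence. *)

From HB Require Import structures.
From mathcomp Require Import all_boot all_order all_algebra.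
From mathcomp Require Import all_classical all_reals all_analysis.
Set Implicit Arguments. Unset Strict Implicit. Unset Printing Implicit Defensive.
Import Order.TTheory GRing.Theory Num.Theory.
Import numFieldNormedType.Exports.
Local Open Scope ring_scope.
Local Open Scope classical_set_scope.

Definition dotp {R : realType} {N : nat} (u v : 'rV[R]_N) : R :=
  \sum_(i < N) u 0 i * v 0 i.
Definition enorm {R : realType} {N : nat} (u : 'rV[R]_N) : R :=
  Num.sqrt (dotp u u).

Definition grad {R : realType} {N : nat} (f : 'rV[R]_N -> R) (x : 'rV[R]_N)
  : 'rV[R]_N := \row_i ('D_(delta_mx 0 i) f x).

Definition is_proj {R : realType} {N : nat} (X : set 'rV[R]_N) (y p : 'rV[R]_N)
  : Prop := X p /\ forall z, X z -> enorm (y - p) <= enorm (y - z).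

Definition ls_cond {R : realType} {N : nat} (ft : 'rV[R]_N -> R)
  (xbar g d : 'rV[R]_N) (beta eps Delta : R) (m : nat) : Prop :=
  ft (xbar + beta ^+ m *: d) <=
    ft xbar + beta ^+ m * (dotp g d - eps * enorm d) - 2 * Delta.

(* If [f] and [h] differ by at most [Delta] at two points, a decrease of [f]
   by more than [2 Delta] between them forces a decrease of [h].  The line
   search test for [f_t] is such a strengthened decrease, with slope
   [g' d - eps ||d||]; since [g] is [eps]-close to [grad f_(t+1)], Cauchy-Schwarz
   puts this slope below [grad f_(t+1)' d].  The trial point lies on the segment
   from [xbar] to the projection [p], hence in [X], where the [Delta]-bound
   holds. *)
From HB Require Import structures.
From mathcomp Require Import all_boot all_order all_algebra.
From mathcomp Require Import all_classical all_reals all_analysis.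
From mathcomp Require Import ring lra.
Import Order.TTheory GRing.Theory Num.Theory.
Import numFieldNormedType.Exports.
Local Open Scope ring_scope.
Local Open Scope classical_set_scope.

Section EuclideanDot.
Context {R : realType} {N : nat}.
Implicit Types u v w : 'rV[R]_N.

Lemma dotpC u v : dotp u v = dotp v u.
Proof. by apply: eq_bigr => i _; rewrite mulrC. Qed.

Lemma dotpBl u v w : dotp (u - v) w = dotp u w - dotp v w.
Proof. by rewrite /dotp -sumrB; apply: eq_bigr => i _; rewrite !mxE mulrBl. Qed.

Lemma dotpp_ge0 u : 0 <= dotp u u.
Proof. by apply: sumr_ge0 => i _; rewrite -expr2 sqr_ge0. Qed.

Lemma enorm_ge0 u : 0 <= enorm u.
Proof. exact: sqrtr_ge0. Qed.

Lemma enorm_sqr u : enorm u ^+ 2 = dotp u u.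
Proof. by rewrite sqr_sqrtr ?dotpp_ge0. Qed.

Lemma dotp_enorm0l u v : enorm u = 0 -> dotp u v = 0.
Proof.
move=> u0; have /psumr_eq0P uu0 : dotp u u = 0 by rewrite -enorm_sqr u0 expr0n.
apply: big1 => i _.
have /eqP : u 0 i * u 0 i = 0 by apply: uu0 => // j _; rewrite -expr2 sqr_ge0.
by rewrite mulf_eq0 orbb => /eqP ->; rewrite mul0r.
Qed.

Lemma dotp_le_enorm u v : dotp u v <= enorm u * enorm v.
Proof.
set a := enorm u; set b := enorm v.
have [a0|a_neq0] := eqVneq a 0; first by rewrite dotp_enorm0l // a0 mul0r.
have [b0|b_neq0] := eqVneq b 0; first by rewrite dotpC dotp_enorm0l // b0 mulr0.
have ab_gt0 : 0 < a * b by rewrite mulr_gt0 // lt_def ?a_neq0 ?b_neq0 enorm_ge0.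
(* Since [a ^+ 2 = u.u] and [b ^+ 2 = v.v], this sum is [2 a b (a b - u.v)]. *)
have expand : \sum_(i < N) (b * u 0 i - a * v 0 i) ^+ 2 =
    b ^+ 2 * dotp u u - 2 * a * b * dotp u v + a ^+ 2 * dotp v v.
  rewrite /dotp !mulr_sumr -sumrB -big_split /=.
  by apply: eq_bigr => i _; ring.
have : 0 <= \sum_(i < N) (b * u 0 i - a * v 0 i) ^+ 2.
  by apply: sumr_ge0 => i _; rewrite sqr_ge0.
rewrite expand -!enorm_sqr -/a -/b; move: (dotp u v) => uv; nra.
Qed.

Lemma dotp_ge_approx {u v} w {eps} :
  enorm (u - v) <= eps -> dotp u w - eps * enorm w <= dotp v w.
Proof.
move=> uv_eps; have := dotp_le_enorm (u - v) w.
rewrite dotpBl; have := ler_wpM2r (enorm_ge0 w) uv_eps; lra.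
Qed.

End EuclideanDot.

Lemma convex_set_segment {R : numDomainType} {M : lmodType R}
    {X : set (convex_lmodType M)} {x y : M} {s : R} :
  convex_set X -> X x -> X y -> 0 <= s <= 1 -> X (x + s *: (y - x)).
Proof.
move=> cX Xx Xy /andP[s0 s1].
have := cX y x (Itv01 s0 s1); rewrite !in_setE => /(_ Xy Xx).
congr X; change (s *: y + (1 - s) *: x = x + s *: (y - x)).
by rewrite scalerBl scale1r scalerBr addrCA.
Qed.

Lemma decrease_transfer {T : Type} {R : realDomainType} (f h : T -> R)
    {Delta c : R} {x y : T} :
  `|f x - h x| <= Delta -> `|f y - h y| <= Delta ->
  f y <= f x + c - 2 * Delta -> h y <= h x + c.
Proof.
move=> dx dy; rewrite distrC in dy.
have := le_trans (ler_norm _) dx; have := le_trans (ler_norm _) dy; lra.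
Qed.

Theorem lemma4 (R : realType) (N : nat) (X : set 'rV[R]_N)
  (ft ft1 : 'rV[R]_N -> R) (Delta : R) (xbar g : 'rV[R]_N) (eps zeta beta : R)
  (M : nat) (p : 'rV[R]_N) (m : nat) :
  convex_set X -> compact X ->
  (forall x, differentiable ft x) -> (forall x, differentiable ft1 x) ->
  convex_function setT ft -> convex_function setT ft1 ->
  (forall x, X x -> `|ft x - ft1 x| <= Delta) ->
  X xbar ->
  0 < eps -> enorm (g - grad ft1 xbar) <= eps -> eps < enorm g ->
  0 < zeta -> 0 < beta < 1 ->
  is_proj X (xbar - zeta *: g) p ->
  (* the line search returns beta^m: m is the least element of {0..M}
     satisfying the test *)
  (m <= M)%N ->
  ls_cond ft xbar g (p - xbar) beta eps Delta m ->
  (forall k, (k < m)%N -> ~ ls_cond ft xbar g (p - xbar) beta eps Delta k) ->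
  0 < beta ^+ m ->
  ft1 (xbar + beta ^+ m *: (p - xbar)) <=
    ft1 xbar + beta ^+ m * dotp (grad ft1 xbar) (p - xbar).
Proof.
move=> cX _ _ _ _ _ close Xxbar _ g_eps _ _ /andP[beta0 beta1] [Xp _] _ test _
  step_gt0.
have step_le1 : beta ^+ m <= 1 by rewrite exprn_ile1 // ltW.
have Xtrial : X (xbar + beta ^+ m *: (p - xbar)).
  by apply: (convex_set_segment cX) => //; rewrite ltW.
apply: le_trans (decrease_transfer _ _ (close _ Xxbar) (close _ Xtrial) test) _.
rewrite lerD2l ler_wpM2l ?(ltW step_gt0) //.
exact: (dotp_ge_approx (p - xbar) g_eps).
Qed.
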